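(* Let $R$ be a ring, $M$ a nonzero left $R$-module, $\Omega$ an infinite set, and $E=\mathrm{End}_R(\bigoplus_{i\in\Omega}M)$ or $E=\mathrm{End}_R(\prod_{i\in\Omega}M)$. Suppose that $(R_i)_{i\in I}$ is a chain (totally ordered by inclusion) of subrings of $E$ such that $\bigcup_{i\in I}R_i=E$ and $|I|\le|\Omega|$. Then $E=R_i$ for some $i\in I$. In other words, $E$ is not the union of a chain of at most $|\Omega|$ proper subrings.
   Context: Rings are unital and associative; subrings of $E$ are understood as subrings of the ring $E$ (closed under addition, negation and multiplication and containing $0$ and $1$). *)

From HB Require Import structures.
From mathcomp Require Import all_boot all_order all_algebra.
From mathcomp Require Import boolp classical_sets functions cardinality.
Set Implicit Arguments. Unset Strict Implicit. Unset Printing Implicit Defensive.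
Import Order.TTheory GRing.Theory Num.Theory.
Local Open Scope classical_set_scope.
Local Open Scope ring_scope.

(* The direct product  prod_{i in Omega} M  is the lmodType (Omega -> M)
   with pointwise operations (instance from mathcomp-classical functions.v).
   The direct sum  bigoplus_{i in Omega} M  is its submodule of finitely
   supported functions, built below as a genuine lmodType [dsum Omega M]. *)

Section DirectSum.
Variables (R : pzRingType) (M : lmodType R) (Omega : Type).

Definition fin_supp (f : Omega -> M) : bool :=
  `[< finite_set [set i | f i != 0] >].

Lemma fin_supp_closed : GRing.subsemimod_closed fin_supp.
Proof.
have supp0 : forall f : Omega -> M, (fin_supp f) = `[< finite_set [set i | f i != 0] >] by [].
split; [split|].
- apply/asboolP; apply: (sub_finite_set _ (finite_set0 _)) => i /=.
  by rewrite eqxx.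
- move=> u v /asboolP fu /asboolP fv; apply/asboolP.
  have : finite_set ([set i | u i != 0] `|` [set i | v i != 0]) by rewrite finite_setU.
  apply: sub_finite_set => i /=.
  rewrite -[(u + v) i]/(u i + v i).
  case: (eqVneq (u i) 0) => [->|]; last by left.
  by rewrite add0r => ?; right.
- move=> a u /asboolP fu; apply/asboolP.
  move: fu; apply: sub_finite_set => i /=.
  rewrite -[(a *: u) i]/(a *: u i).
  by apply: contra_neq => ->; rewrite scaler0.
Qed.

HB.instance Definition _ := GRing.isSubmodClosed.Build R (Omega -> M) fin_supp
  fin_supp_closed.

Record dsum := DSum { dsum_val : Omega -> M; _ : dsum_val \in fin_supp }.
HB.instance Definition _ := [isSub for dsum_val].
HB.instance Definition _ := [Choice of dsum by <:].
HB.instance Definition _ := [SubChoice_isSubLmodule of dsum by <:].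
End DirectSum.

Definition EndR (R : pzRingType) (V : lmodType R) : set (V -> V) :=
  [set f | (forall u v, f (u + v) = f u + f v) /\
           (forall (a : R) u, f (a *: u) = a *: f u)].

Arguments EndR {R} V.

Definition is_subring_End (R : pzRingType) (V : lmodType R) (S : set (V -> V)) :=
  S `<=` EndR V /\
  S (fun _ => 0) /\ S id /\
  (forall f g, S f -> S g -> S (fun x => f x + g x)) /\
  (forall f, S f -> S (fun x => - f x)) /\
  (forall f g, S f -> S g -> S (f \o g)).

Definition no_small_chain_union (R : pzRingType) (V : lmodType R) (Omega : Type) :=
  forall (I : Type) (Rs : I -> set (V -> V)),
    ([set: I] #<= [set: Omega])%card ->
    (forall i, is_subring_End (Rs i)) ->
    (forall i j, Rs i `<=` Rs j \/ Rs j `<=` Rs i) ->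
    \bigcup_i Rs i = EndR V ->
    exists i, Rs i = EndR V.

From mathcomp Require Import all_boot all_algebra.
From mathcomp Require Import boolp classical_sets functions cardinality.
Set Implicit Arguments. Unset Strict Implicit. Unset Printing Implicit Defensive.
Import GRing.Theory.
Local Open Scope classical_set_scope.

(* Since Omega is infinite, |Omega * Omega| = |Omega| (Zorn's lemma applied to
   partial injections D * D -> D), so the module V splits blockwise as V^(Omega):
   there are endomorphisms x_j, y_j of V (j in Omega) with y_j x_j = 1 such that
   every family (F_j) of endomorphisms is realised as F_j = y_j g x_j by a single
   g.  Given a chain (R_i)_(i in I) of proper subrings covering E and an
   injection e : I -> Omega, choose for each i a member R_(l i) containing R_i,
   x_(e i) and y_(e i), and some f_i outside R_(l i).  The g realising
   F_(e i) = f_i lies in some R_m, and then f_m = y_(e m) g x_(e m) lies in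
   R_(l m), a contradiction. *)

Lemma total_on_ub2 (T : Type) (F : set (set T)) : total_on F subset ->
  forall X Y, F X -> F Y -> exists2 Z, F Z & X `<=` Z /\ Y `<=` Z.
Proof.
move=> Ftot X Y FX FY.
by have [XY|YX] := Ftot X Y FX FY; [exists Y|exists X] => //; split.
Qed.

Lemma choice_on (T U : Type) (u0 : U) (A : set T) (P : T -> U -> Prop) :
  (forall a, A a -> exists u, P a u) -> exists f : T -> U, forall a, A a -> P a (f a).
Proof.
move=> AP; suff /choice[f Pf] : forall a, exists u, A a -> P a u by exists f.
move=> a; have [/AP[u Pu]|nAa] := pselect (A a); first by exists u.
by exists u0.
Qed.

Lemma Zorn_bigcup_above (T : Type) (P : set (set T)) (A0 : set T) : P A0 ->
    (forall F : set (set T), F `<=` P -> total_on F subset ->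
      P (\bigcup_(X in F) X)) ->
  exists A, [/\ A0 `<=` A, P A & forall B, A `<` B -> ~ P B].
Proof.
move=> PA0 Pchain.
have [A [PA Amax]] : exists A, P (A0 `|` A) /\ forall B, A `<` B -> ~ P (A0 `|` B).
  apply: Zorn_bigcup => F FP Ftot.
  have [->|/set0P[X FX]] := eqVneq F set0.
    by rewrite bigcup_set0 setU0.
  have -> : A0 `|` \bigcup_(X in F) X = \bigcup_(Y in setU A0 @` F) Y.
    apply/seteqP; split=> [t [A0t|[Y FY Yt]]|t [_ [Y FY <-] [A0t|Yt]]].
    - by exists (A0 `|` X); [exists X|left].
    - by exists (A0 `|` Y); [exists Y|right].
    - by left.
    - by right; exists Y.
  apply: Pchain => [_ [Y FY <-]|_ _ [Y FY <-] [Z FZ <-]]; first exact: FP.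
  by have [YZ|ZY] := Ftot _ _ FY FZ; [left|right]; apply: setUS.
exists (A0 `|` A); split => // B [AB BA] PB; apply: (Amax B).
  split; first by move=> t At; apply: AB; right.
  by move=> BA'; apply: BA => t Bt; right; apply: BA'.
by rewrite setUidr // => t A0t; apply: AB; left.
Qed.

Section Graphs.
Variables T U : Type.
Implicit Types H : set (T * U).

Definition graph_fun H := forall a c c', H (a, c) -> H (a, c') -> c = c'.
Definition graph_inj H := forall a a' c, H (a, c) -> H (a', c) -> a = a'.

Lemma bigcup_graph_fun (F : set (set (T * U))) : total_on F subset ->
  (forall H, F H -> graph_fun H) -> graph_fun (\bigcup_(H in F) H).
Proof.
move=> /total_on_ub2 Ftot Ffun a c c' [X FX Xc] [Y FY Yc'].
have [Z FZ [XZ YZ]] := Ftot X Y FX FY.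
exact: (Ffun Z FZ a _ _ (XZ _ Xc) (YZ _ Yc')).
Qed.

Lemma bigcup_graph_inj (F : set (set (T * U))) : total_on F subset ->
  (forall H, F H -> graph_inj H) -> graph_inj (\bigcup_(H in F) H).
Proof.
move=> /total_on_ub2 Ftot Finj a a' c [X FX Xc] [Y FY Yc'].
have [Z FZ [XZ YZ]] := Ftot X Y FX FY.
exact: (Finj Z FZ _ _ c (XZ _ Xc) (YZ _ Yc')).
Qed.

End Graphs.

Lemma inj_dichotomy (T U : Type) (t0 : T) (u0 : U) (A : set T) (B : set U) :
  (exists2 f : T -> U, set_fun A B f & set_inj A f) \/
  (exists2 g : U -> T, set_fun B A g & set_inj B g).
Proof.
pose P (H : set (T * U)) := [/\ H `<=` A `*` B, graph_fun H & graph_inj H].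
have [H [[HAB Hfun Hinj] Hmax]] : exists H, P H /\ forall H', H `<` H' -> ~ P H'.
  apply: Zorn_bigcup => F FP Ftot; split.
  - by move=> p [X /FP[+ _ _]]; apply.
  - by apply: bigcup_graph_fun => // X /FP[].
  - by apply: bigcup_graph_inj => // X /FP[].
have [Adom|/existsNP[a /not_implyP[Aa /forallNP Ha]]] :=
  pselect (forall a, A a -> exists b, H (a, b)).
  left; have [f Hf] := choice_on u0 Adom; exists f.
    by move=> a /Hf/HAB[].
  by move=> a a' /set_mem/Hf Ha /set_mem/Hf + fa; rewrite -fa => /(Hinj _ _ _ Ha).
have [Bdom|/existsNP[b /not_implyP[Bb /forallNP Hb]]] :=
  pselect (forall b, B b -> exists a, H (a, b)).
  right; have [g Hg] := choice_on t0 Bdom; exists g.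
    by move=> b /Hg/HAB[].
  by move=> b b' /set_mem/Hg Hb /set_mem/Hg + gb; rewrite -gb => /(Hfun _ _ _ Hb).
exfalso; apply: (Hmax (H `|` [set (a, b)])).
  split; first by move=> p Hp; left.
  by move=> /(_ (a, b) (or_intror erefl)) /Ha.
split.
- by move=> p [/HAB //|->].
- move=> a1 b1 b2 [H1|E1] [H2|E2].
  + exact: Hfun H1 H2.
  + by case: E2 => ea _; move: H1; rewrite ea => /Ha.
  + by case: E1 => ea _; move: H2; rewrite ea => /Ha.
  + by case: E1 => _ ->; case: E2 => _ ->.
- move=> a1 a2 b1 [H1|E1] [H2|E2].
  + exact: Hinj H1 H2.
  + by case: E2 => _ eb; move: H1; rewrite eb => /Hb.
  + by case: E1 => _ eb; move: H2; rewrite eb => /Hb.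
  + by case: E1 => -> _; case: E2 => -> _.
Qed.

Lemma set_inj_pair (T U : Type) (D : set T) (f : T * T -> U) :
  set_inj (D `*` D) f -> forall a b a' b', D a -> D b -> D a' -> D b' ->
  f (a, b) = f (a', b') -> a = a' /\ b = b'.
Proof.
move=> f_inj a b a' b' Da Db Da' Db' fab; have := f_inj (a, b) (a', b'); rewrite !inE.
by move=> /(_ (conj Da Db) (conj Da' Db') fab) [-> ->].
Qed.

Lemma pairing_of_large_set (T : Type) (D : set T) (f : T * T -> T) (z o : T)
    (h : T -> T) :
  set_fun (D `*` D) D f -> set_inj (D `*` D) f -> D z -> D o -> z <> o ->
  set_fun (~` D) D h -> set_inj (~` D) h -> exists F : T * T -> T, injective F.
Proof.
move=> fD f_inj Dz Do zo hD h_inj.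
have f_inj2 := set_inj_pair f_inj.
pose e t := if pselect (D t) is left _ then f (z, t) else f (o, h t).
have eD t : D (e t).
  by rewrite /e; case: pselect => Dt; apply: fD; split => //=; apply: hD.
have e_inj : injective e.
  move=> s t; rewrite /e; case: pselect => Ds; case: pselect => Dt.
  - by move=> /(f_inj2 _ _ _ _ Dz Ds Dz Dt)[].
  - by move=> /(f_inj2 _ _ _ _ Dz Ds Do (hD _ Dt))[].
  - by move=> /(f_inj2 _ _ _ _ Do (hD _ Ds) Dz Dt)[/esym].
  - move=> /(f_inj2 _ _ _ _ Do (hD _ Ds) Do (hD _ Dt))[_].
    by move=> /h_inj; apply; apply: mem_set.
exists (fun p => f (e p.1, e p.2)) => -[a b] [a' b'] /=.
by move=> /(f_inj2 _ _ _ _ (eD a) (eD b) (eD a') (eD b'))[/e_inj -> /e_inj ->].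
Qed.

Section PairingGraph.
Variable T : Type.
Implicit Types G : set ((T * T) * T).

(* A pairing graph is the graph of an injection D * D -> D, D being its field;
   graphs rather than functions, so that unions of chains stay pairing graphs. *)
Definition graph_field G : set T :=
  [set t | exists p x, G (p, x) /\ [\/ t = p.1, t = p.2 | t = x]].

Definition pairing_graph G := [/\ graph_fun G, graph_inj G &
  forall a b, graph_field G a -> graph_field G b -> exists x, G ((a, b), x)].

Lemma graph_field_mem G a b x :
  G ((a, b), x) -> [/\ graph_field G a, graph_field G b & graph_field G x].
Proof.
by move=> Gx; split; exists (a, b), x; split=> //; [apply: Or31|apply: Or32|apply: Or33].
Qed.

Lemma bigcup_pairing_graph (F : set (set ((T * T) * T))) :
  F `<=` pairing_graph -> total_on F subset ->
  pairing_graph (\bigcup_(G in F) G).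
Proof.
move=> FP Ftot; split.
- by apply: bigcup_graph_fun => // G /FP[].
- by apply: bigcup_graph_inj => // G /FP[].
move=> a b [p [x [[X FX Xp] ea]]] [p' [x' [[Y FY Yp'] eb]]].
have [Z FZ [XZ YZ]] := total_on_ub2 Ftot FX FY.
have [_ _ Ztot] := FP Z FZ.
have Za : graph_field Z a by exists p, x; split=> //; apply: XZ.
have Zb : graph_field Z b by exists p', x'; split=> //; apply: YZ.
by have [y Zy] := Ztot a b Za Zb; exists y, Z.
Qed.

Lemma pairing_graph_fun G (t0 : T) : pairing_graph G ->
  let D := graph_field G in
  exists2 f : T * T -> T, set_fun (D `*` D) D f & set_inj (D `*` D) f.
Proof.
move=> [_ Ginj Gtot] D.
have [f Gf] : exists f : T * T -> T, forall p, (D `*` D) p -> G (p, f p).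
  by apply: (choice_on t0 (P := fun p x => G (p, x))) => -[a b] [Da Db]; apply: Gtot.
exists f; first by move=> [a b] /Gf /graph_field_mem[].
by move=> p q /set_mem/Gf Gp /set_mem/Gf + fpq; rewrite -fpq; apply: Ginj.
Qed.

Lemma pairing_graph_image (X : Type) (e : X -> T) (c : X * X -> X) :
  injective e -> injective c ->
  pairing_graph ((fun p => ((e p.1, e p.2), e (c p))) @` setT).
Proof.
move=> e_inj c_inj; split.
- by move=> p x y [[a b] _ [<- <-]] [[a' b'] _ [/e_inj -> /e_inj -> <-]].
- by move=> p p' x [[a b] _ [<- <-]] [[a' b'] _ [<- /e_inj/c_inj[-> ->]]].
have field_e t : graph_field ((fun p => ((e p.1, e p.2), e (c p))) @` setT) t ->
    exists k, t = e k.
  by move=> [p [x [[[a b] _ [<- <-]] [->|->|->]]]]; eexists.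
move=> _ _ /field_e[a ->] /field_e[b ->].
by exists (e (c (a, b))); exists (a, b).
Qed.

End PairingGraph.

Section PairingGraphExtension.
Variables (T : Type) (G : set ((T * T) * T)) (f : T * T -> T) (g : T -> T).
Variables z o : T.
Let D := graph_field G.
Hypothesis pG : pairing_graph G.
Hypotheses (fD : set_fun (D `*` D) D f) (f_inj : set_inj (D `*` D) f).
Hypotheses (Dz : D z) (Do : D o) (zo : z <> o).
Hypotheses (gD : set_fun D (~` D) g) (g_inj : set_inj D g).

Let f_inj2 := set_inj_pair f_inj.

Let copy (u : bool) a := if u then a else g a.
Let tag (u : bool) := if u then o else z.
Let code u v a b := f (f (tag u, tag v), f (a, b)).

Let copy_field u a : D a -> D (copy u a) <-> u.
Proof. by case: u => Da //=; split=> // /(gD Da). Qed.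

Let copy_inj u u' a a' : D a -> D a' -> copy u a = copy u' a' -> u = u' /\ a = a'.
Proof.
move=> Da Da' e; have uu' : u = u'.
  apply/idP/idP => [/(copy_field u Da).2|/(copy_field u' Da').2].
    by rewrite e => /(copy_field u' Da').1.
  by rewrite -e => /(copy_field u Da).1.
split=> //; move: e; rewrite -uu' /copy; case: u {uu'} => // /g_inj.
by apply; apply: mem_set.
Qed.

Let tagD u : D (tag u). Proof. by case: u. Qed.

Let tag_inj : injective tag.
Proof. by case; case => //= E; case: zo; rewrite E. Qed.

Let fD2 a b : D a -> D b -> D (f (a, b)).
Proof. by move=> Da Db; apply: fD; split. Qed.

Let code_field u v a b : D a -> D b -> D (code u v a b).
Proof. by move=> Da Db; apply: fD2; apply: fD2. Qed.

Let code_inj u v a b u' v' a' b' : D a -> D b -> D a' -> D b' ->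
  code u v a b = code u' v' a' b' -> [/\ u = u', v = v', a = a' & b = b'].
Proof.
move=> Da Db Da' Db' /(f_inj2 (fD2 (tagD u) (tagD v)) (fD2 Da Db)
  (fD2 (tagD u') (tagD v')) (fD2 Da' Db'))[].
move=> /(f_inj2 (tagD u) (tagD v) (tagD u') (tagD v'))[/tag_inj -> /tag_inj ->].
by move=> /(f_inj2 Da Db Da' Db')[-> ->].
Qed.

(* The pairs of D `|` g @` D outside D `*` D are sent injectively into g @` D;
   the tags record which coordinates come from the new copy g @` D. *)
Let ext : set ((T * T) * T) := [set q | exists u v a b, [/\ ~~ (u && v), D a, D b &
  q = ((copy u a, copy v b), g (code u v a b))]].

Let G_field p x : G (p, x) -> [/\ D p.1, D p.2 & D x].
Proof. by case: p => a b; apply: graph_field_mem. Qed.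

Let ext_new p x : ext (p, x) -> ~ (D p.1 /\ D p.2) /\ ~ D x.
Proof.
move=> [u [v [a [b [uv Da Db [-> ->]]]]]]; split; last exact: gD (code_field _ _ Da Db).
move=> /= [Du Dv]; move: uv.
by rewrite ((copy_field u Da).1 Du) ((copy_field v Db).1 Dv).
Qed.

Let ext_field t : graph_field (G `|` ext) t -> exists u a, D a /\ t = copy u a.
Proof.
move=> [p [x [[/G_field[Dp1 Dp2 Dx]|Ex] ht]]].
  by case: ht => ->; [exists true, p.1|exists true, p.2|exists true, x].
move: Ex ht => [u [v [a [b [_ Da Db [-> ->]]]]]] [->|->|->] /=.
- by exists u, a.
- by exists v, b.
- by exists false, (code u v a b); split => //; apply: code_field.
Qed.

Let pairing_graph_ext : pairing_graph (G `|` ext).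
Proof.
have [Gfun Ginj Gtot] := pG; split.
- move=> p x y [Gx|Ex] [Gy|Ey].
  + exact: Gfun Gx Gy.
  + by have [Dp1 Dp2 _] := G_field Gx; case: (ext_new Ey).1.
  + by have [Dp1 Dp2 _] := G_field Gy; case: (ext_new Ex).1.
  + move: Ex Ey => [u [v [a [b [_ Da Db [-> ->]]]]]].
    move=> [u' [v' [a' [b' [_ Da' Db' [e1 e2 ->]]]]]].
    have [-> ->] := copy_inj Da Da' e1.
    by have [-> ->] := copy_inj Db Db' e2.
- move=> p q x [Gx|Ex] [Gy|Ey].
  + exact: Ginj Gx Gy.
  + by have [_ _ Dx] := G_field Gx; case: (ext_new Ey).2.
  + by have [_ _ Dx] := G_field Gy; case: (ext_new Ex).2.
  + move: Ex Ey => [u [v [a [b [_ Da Db [-> ->]]]]]].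
    move=> [u' [v' [a' [b' [_ Da' Db' [-> /g_inj]]]]]].
    rewrite !inE => /(_ (code_field _ _ Da Db) (code_field _ _ Da' Db')).
    by move=> /(code_inj Da Db Da' Db')[-> -> -> ->].
move=> _ _ /ext_field[u [a [Da ->]]] /ext_field[v [b [Db ->]]].
have [/andP[]|uv] := boolP (u && v); last first.
  by exists (g (code u v a b)); right; exists u, v, a, b.
case: u; case: v => // _ _.
by have [x Gx] := Gtot a b Da Db; exists x; left.
Qed.

Lemma pairing_graph_extend : exists2 G', G `<` G' & pairing_graph G'.
Proof.
exists (G `|` ext); last exact: pairing_graph_ext.
split=> [q Gq|extG]; first by left.
have /extG/G_field[/= Dgz _ _] : (G `|` ext) ((g z, g z), g (code false false z z)).
  by right; exists false, false, z, z.
exact: gD Dz Dgz.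
Qed.
End PairingGraphExtension.

Lemma card_le_inj (X Y : Type) :
  ([set: X] #<= [set: Y])%card -> exists f : X -> Y, injective f.
Proof.
move/card_leP => [f].
exists (fun x => set_val (f (SigSub (mem_set (A := setT) (u := x) Logic.I)))).
move=> x y; rewrite set_valE => /val_inj/(@inj _ _ _ f).
by move=> /(_ (mem_set Logic.I) (mem_set Logic.I)) /(congr1 val).
Qed.

Lemma infinite_pairing (T : Type) :
  infinite_set [set: T] -> exists f : T * T -> T, injective f.
Proof.
move=> /infiniteP/card_le_inj[n n_inj].
have [c c_inj] : exists c : nat * nat -> nat, injective c.
  by apply: card_le_inj; have /card_eqPle[] := card_nat2.
have [G [seedG pG Gmax]] := Zorn_bigcup_above (P := @pairing_graph T)
  (pairing_graph_image n_inj c_inj) (@bigcup_pairing_graph T).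
(* The seed puts a copy of nat, in particular two distinct points, into D. *)
pose D := graph_field G.
have Dn k : D (n k).
  have Gk : G ((n k, n k), n (c (k, k))) by apply: seedG; exists (k, k).
  by have [] := graph_field_mem Gk.
have n01 : n 0%N <> n 1%N by move/n_inj.
have [f fD f_inj] := pairing_graph_fun (n 0%N) pG.
(* An injection of D into its complement would extend the maximal G. *)
have [[g gD g_inj]|[h hD h_inj]] := inj_dichotomy (n 0%N) (n 0%N) D (~` D).
  have [G' GG' pG'] := pairing_graph_extend pG fD f_inj (Dn 0%N) (Dn 1%N) n01 gD g_inj.
  by case: (Gmax G').
exact: pairing_of_large_set fD f_inj (Dn 0%N) (Dn 1%N) n01 hD h_inj.
Qed.

Local Open Scope ring_scope.

Lemma EndR0 (R : pzRingType) (V : lmodType R) (f : V -> V) : EndR V f -> f 0 = 0.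
Proof. by move=> [fD _]; apply: (addrI (f 0)); rewrite -fD !addr0. Qed.

Lemma fin_suppP (R : pzRingType) (M : lmodType R) (Omega : Type) (v : Omega -> M) :
  fin_supp v <-> finite_set [set o | v o != 0].
Proof. by split=> /asboolP. Qed.

Lemma EndR_dsum (R : pzRingType) (M : lmodType R) (Omega : Type)
    (f : dsum M Omega -> dsum M Omega) :
  (forall u v, dsum_val (f (u + v)) = dsum_val (f u) + dsum_val (f v)) ->
  (forall a u, dsum_val (f (a *: u)) = a *: dsum_val (f u)) -> EndR (dsum M Omega) f.
Proof. by move=> fD fZ; split=> [u v|a u]; apply: val_inj; [apply: fD|apply: fZ]. Qed.

Lemma EndR_fun (R : pzRingType) (M : lmodType R) (Omega : Type)
    (f : (Omega -> M) -> Omega -> M) :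
  (forall u v w, f (u + v) w = f u w + f v w) ->
  (forall a u w, f (a *: u) w = a *: f u w) -> EndR (Omega -> M) f.
Proof. by move=> fD fZ; split=> [u v|a u]; apply/funext=> w; [apply: fD|apply: fZ]. Qed.

Lemma no_small_chain_union_of_blocks (R : pzRingType) (V : lmodType R) (J : Type)
    (x y : J -> V -> V) :
  (forall j, EndR V (x j)) -> (forall j, EndR V (y j)) ->
  (forall F : J -> V -> V, (forall j, EndR V (F j)) ->
     exists2 g, EndR V g & forall j, y j \o g \o x j = F j) ->
  no_small_chain_union V J.
Proof.
move=> xE yE glue I Rs /card_le_inj[e e_inj] Rs_ring Rs_chain Rs_cover.
apply: contrapT => /forallNP Rs_proper.
have above i h : EndR V h -> exists l, Rs i `<=` Rs l /\ Rs l h.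
  move=> Eh; have [k _ Rk] : (\bigcup_i Rs i) h by rewrite Rs_cover.
  by have [ik|ki] := Rs_chain i k; [exists k|exists i; split=> //; apply: ki].
have /choice[l Rl] : forall i, exists l,
    [/\ Rs i `<=` Rs l, Rs l (x (e i)) & Rs l (y (e i))].
  move=> i; have [k [ik Rkx]] := above i _ (xE (e i)).
  have [l [kl Rly]] := above k _ (yE (e i)).
  by exists l; split=> // [h /ik/kl|]; last exact: kl.
have /choice[f Rf] : forall i, exists f, EndR V f /\ ~ Rs (l i) f.
  move=> i; apply: contrapT => /forallNP nf; apply: (Rs_proper (l i)).
  apply/seteqP; split=> [|h Eh]; first by case: (Rs_ring (l i)).
  by apply: contrapT => nh; apply: (nf h).
have /choice[F FE] : forall j, exists Fj, EndR V Fj /\ forall i, e i = j -> Fj = f i.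
  move=> j; have [[i <-]|nj] := pselect (exists i, e i = j).
    by exists (f i); split=> [|i' /e_inj ->]; [exact: (Rf i).1|].
  by exists id; split=> // i ij; case: nj; exists i.
have [g gE gF] := glue F (fun j => (FE j).1).
have [m _ Rmg] : (\bigcup_i Rs i) g by rewrite Rs_cover.
have [ml Rlx Rly] := Rl m.
have [_ [_ [_ [_ [_ Rl_comp]]]]] := Rs_ring (l m).
apply: (Rf m).2; rewrite -((FE (e m)).2 m erefl) -gF.
by apply: (Rl_comp); [apply: (Rl_comp); [|apply: ml]|].
Qed.

Section Blocks.
Variables (R : pzRingType) (M : lmodType R) (Omega : Type).
Variables (phi : Omega * Omega -> Omega) (pi : Omega -> Omega * Omega).
Hypothesis phiK : cancel phi pi.
Let phi_inj : injective phi := can_inj phiK.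

Definition of_block (j : Omega) (v : Omega -> M) : Omega -> M := fun o => v (phi (j, o)).

Definition to_block (j : Omega) (v : Omega -> M) : Omega -> M := fun w =>
  if pselect (exists o, phi (j, o) = w) is left _ then v (pi w).2 else 0.

Definition assemble (X : Type) (F : Omega -> X -> Omega -> M) (x : X) : Omega -> M :=
  fun w => if pselect (exists q, phi q = w) is left _ then F (pi w).1 x (pi w).2 else 0.

Lemma to_blockK j : cancel (to_block j) (of_block j).
Proof.
move=> v; apply/funext => o; rewrite /of_block /to_block.
by case: pselect => [_|[]]; [rewrite phiK|exists o].
Qed.

Lemma of_block_assemble X (F : Omega -> X -> Omega -> M) x j :
  of_block j (assemble F x) = F j x.
Proof.
apply/funext => o; rewrite /of_block /assemble.
by case: pselect => [_|[]]; [rewrite phiK|exists (j, o)].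
Qed.

Lemma of_block_End j : EndR (Omega -> M) (of_block j).
Proof. exact: EndR_fun. Qed.

Lemma to_block_End j : EndR (Omega -> M) (to_block j).
Proof.
apply: EndR_fun => [u v w|a u w]; rewrite /to_block; case: pselect => _ //.
  by rewrite addr0.
by rewrite scaler0.
Qed.

Lemma assembleD (X : lmodType R) (F : Omega -> X -> Omega -> M) :
  (forall j, {morph F j : u v / u + v}) -> {morph assemble F : u v / u + v}.
Proof.
move=> FD u v; apply/funext => w.
change (assemble F (u + v) w = assemble F u w + assemble F v w).
by rewrite /assemble; case: pselect => _; rewrite ?addr0 // FD.
Qed.

Lemma assembleZ (X : lmodType R) (F : Omega -> X -> Omega -> M) :
  (forall j a, {morph F j : u / a *: u}) -> forall a, {morph assemble F : u / a *: u}.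
Proof.
move=> FZ a u; apply/funext => w.
change (assemble F (a *: u) w = a *: assemble F u w).
by rewrite /assemble; case: pselect => _; rewrite ?scaler0 // FZ.
Qed.

Lemma no_small_chain_union_prod : no_small_chain_union (Omega -> M) Omega.
Proof.
apply: (no_small_chain_union_of_blocks to_block_End of_block_End).
move=> F FE; exists (assemble (fun j v => F j (of_block j v))).
  split; first by apply: assembleD => j u v; rewrite (FE j).1.
  by apply: assembleZ => j a u; rewrite (FE j).2.
by move=> j; apply/funext => v /=; rewrite of_block_assemble to_blockK.
Qed.


Lemma of_block_fin j v : fin_supp v -> fin_supp (of_block j v).
Proof.
move=> /fin_suppP v_fin; apply/fin_suppP; apply: card_le_finite v_fin.
by apply: (card_ge_preimage (f := fun o => phi (j, o))) => o o' _ _ /phi_inj[].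
Qed.

Lemma to_block_fin j v : fin_supp v -> fin_supp (to_block j v).
Proof.
move=> /fin_suppP v_fin; apply/fin_suppP.
apply: sub_finite_set (finite_image (fun o => phi (j, o)) v_fin) => w /=.
rewrite /to_block; case: pselect => [[o <-]|]; last by rewrite eqxx.
by rewrite phiK => vo; exists o.
Qed.

Lemma nonzero_blocks_fin v : fin_supp v -> finite_set [set j | of_block j v != 0].
Proof.
move=> /fin_suppP v_fin.
have pre_fin : finite_set (phi @^-1` [set w | v w != 0]).
  by apply: card_le_finite v_fin; apply: card_ge_preimage => p q _ _ /phi_inj.
apply: sub_finite_set (finite_image fst pre_fin) => j /=.
move=> /eqP nj; apply: contrapT => nim; apply: nj; apply/funext => o /=.
by apply/eqP/negPn/negP => vo; apply: nim; exists (j, o).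
Qed.

Lemma assemble_fin X (F : Omega -> X -> Omega -> M) x :
  finite_set [set j | F j x != 0] -> (forall j, fin_supp (F j x)) ->
  fin_supp (assemble F x).
Proof.
move=> J_fin F_fin; apply/fin_suppP.
have blocks_fin : forall j, [set j | F j x != 0] j ->
    finite_set ((fun o => phi (j, o)) @` [set o | F j x o != 0]).
  by move=> j _; apply: finite_image; apply/fin_suppP.
apply: sub_finite_set (bigcup_finite J_fin blocks_fin) => w /=.
rewrite /assemble; case: pselect => [[[j o] <-]|]; last by rewrite eqxx.
rewrite phiK /= => Fo; exists j; last by exists o.
by apply: contra_neq Fo => ->.
Qed.

Lemma no_small_chain_union_dsum : no_small_chain_union (dsum M Omega) Omega.
Proof.
pose xD j (v : dsum M Omega) := DSum (to_block_fin j (valP v)).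
pose yD j (v : dsum M Omega) := DSum (of_block_fin j (valP v)).
have xE j : EndR (dsum M Omega) (xD j).
  by apply: EndR_dsum => [u v|a u]; [apply: (to_block_End j).1|apply: (to_block_End j).2].
have yE j : EndR (dsum M Omega) (yD j) by apply: EndR_dsum.
apply: (no_small_chain_union_of_blocks xE yE) => F FE.
pose G j v := dsum_val (F j (yD j v)).
have G_fin v : fin_supp (assemble G v).
  apply: assemble_fin => [|j]; last exact: valP.
  apply: sub_finite_set (nonzero_blocks_fin (valP v)) => j /=; apply: contra_neq => vj0.
  rewrite /G; suff -> : yD j v = 0 by rewrite EndR0.
  exact: val_inj.
exists (fun v => DSum (G_fin v)).
  apply: EndR_dsum => [u v|a u] /=.
    by apply: assembleD => j {}u {}v; rewrite /G (yE j).1 (FE j).1.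
  by apply: assembleZ => j b {}u; rewrite /G (yE j).2 (FE j).2.
move=> j; apply/funext => v; apply: val_inj => /=.
rewrite of_block_assemble /G; congr (dsum_val (F j _)).
by apply: val_inj; rewrite /= to_blockK.
Qed.

End Blocks.

Theorem theorem3 (R : nzRingType) (M : lmodType R) (Omega : Type) :
  (exists m : M, m != 0) ->
  infinite_set [set: Omega] ->
  no_small_chain_union (dsum M Omega) Omega /\
  no_small_chain_union (Omega -> M) Omega.
Proof.
move=> _ Omega_inf.
have [phi phi_inj] := infinite_pairing Omega_inf.
have [w0 _] := infinite_setN0 Omega_inf.
have phiK : cancel phi ('pinv_(fun=> (w0, w0)) setT phi).
  by move=> p; rewrite (pinvKV (fun=> (w0, w0)) (in2W phi_inj) (in_setT p)).
split; [exact: no_small_chain_union_dsum phiK|exact: no_small_chain_union_prod phiK].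
Qed.
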